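(* For every group $G$, let $\epsilon\colon\mathrm{Gr}(\mathrm{Pq}(G))\to G$ be the surjective group homomorphism with $\epsilon(\sigma(a))=a$ for all $a\in G$. Then the kernel of $\epsilon$ is contained in the center of $\mathrm{Gr}(\mathrm{Pq}(G))$; in particular $\mathrm{Gr}(\mathrm{Pq}(G))$ is a central extension of $G$ with abelian kernel.
   Context: For a group $G$, $\mathrm{Pq}(G)$ is the power quandle on the underlying set of $G$ with $a\rhd b=aba^{-1}$, $\pi^n(a)=a^n$ ($n\in\mathbb{Z}$), and unit the identity $e$. For a power quandle $P$ (a set with operation $\rhd$, maps $\pi^n$, unit $e$), $\mathrm{Gr}(P)$ is the group with generators $\sigma(a)$, $a\in P$, and relations $\sigma(a\rhd b)=\sigma(a)\sigma(b)\sigma(a)^{-1}$, $\sigma(\pi^n(a))=\sigma(a)^n$, $\sigma(e)=1$ for all $a,b\in P$, $n\in\mathbb{Z}$. Thus $\mathrm{Gr}(\mathrm{Pq}(G))$ has generators $\sigma(a)$, $a\in G$, with relations $\sigma(aba^{-1})=\sigma(a)\sigma(b)\sigma(a)^{-1}$, $\sigma(a^n)=\sigma(a)^n$, $\sigma(e)=1$. *)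

(* Abstract (possibly infinite) groups and the group Gr(Pq(G))
   given by generators and relations, realised as words modulo the congruence
   generated by the defining relations (a setoid presentation). *)
From Stdlib Require Import ZArith List.
Import ListNotations.
Set Implicit Arguments.

Record Group := {
  gcar :> Type;
  gmul : gcar -> gcar -> gcar;
  ginv : gcar -> gcar;
  gone : gcar;
  gmulA : forall x y z, gmul x (gmul y z) = gmul (gmul x y) z;
  gmul1l : forall x, gmul gone x = x;
  gmul1r : forall x, gmul x gone = x;
  gmulVl : forall x, gmul (ginv x) x = gone;
  gmulVr : forall x, gmul x (ginv x) = gone
}.

Arguments gmul {g}.
Arguments ginv {g}.
Arguments gone {g}.

(* integer powers a^n in G, i.e. pi^n(a) in Pq(G) *)
Definition gnpow {G : Group} (a : G) (n : nat) : G := Nat.iter n (gmul a) gone.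
Definition gpow {G : Group} (a : G) (z : Z) : G :=
  match z with
  | Z0 => gone
  | Zpos p => gnpow a (Pos.to_nat p)
  | Zneg p => ginv (gnpow a (Pos.to_nat p))
  end.

(* Words in the generators sigma(a), a in G: (true, a) stands for sigma(a),
   (false, a) for sigma(a)^{-1}.  Concatenation is the product. *)
Definition word (G : Group) := list (bool * G).

Definition sigma_pow {G : Group} (a : G) (z : Z) : word G :=
  match z with
  | Z0 => []
  | Zpos p => repeat (true, a) (Pos.to_nat p)
  | Zneg p => repeat (false, a) (Pos.to_nat p)
  end.

Inductive gr_eq (G : Group) : word G -> word G -> Prop :=
  | gr_refl u : gr_eq u u
  | gr_sym u v : gr_eq u v -> gr_eq v u
  | gr_trans u v w : gr_eq u v -> gr_eq v w -> gr_eq u w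
  | gr_app u u' v v' : gr_eq u u' -> gr_eq v v' -> gr_eq (u ++ v) (u' ++ v')
  | gr_cancel (b : bool) (a : G) : gr_eq [(b, a); (negb b, a)] []
  | gr_conj (a b : G) :
      gr_eq [(true, gmul (gmul a b) (ginv a))] [(true, a); (true, b); (false, a)]
  | gr_pow (a : G) (n : Z) : gr_eq [(true, gpow a n)] (sigma_pow a n)
  | gr_unit : gr_eq [(true, @gone G)] [].

Definition epsilon {G : Group} (w : word G) : G :=
  fold_right (fun (l : bool * G) (acc : G) => gmul (if fst l then snd l else ginv (snd l)) acc) gone w.

Definition gr_central {G : Group} (w : word G) : Prop :=
  forall v : word G, gr_eq (w ++ v) (v ++ w).

(* Pushing a generator sigma(c) leftwards past a letter sigma(a)^{+-1} turns it
   into sigma(a^{+-1} c a^{-+1}) by the conjugation relation, so for every word w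
   we get  w sigma(c) = sigma(epsilon(w) c epsilon(w)^{-1}) w.  When epsilon(w) = e
   this says that w commutes with every generator, hence with their inverses and
   with every word. *)
From Stdlib Require Import ZArith List Setoid Morphisms.
Import ListNotations.

Section GroupFacts.
Variable G : Group.

Lemma ginv_unique (x y : G) : gmul x y = gone -> y = ginv x.
Proof.
  intro H. rewrite <- (gmul1l G y), <- (gmulVl G x), <- gmulA, H, gmul1r.
  reflexivity.
Qed.

Lemma ginv_mul (x y : G) : ginv (gmul x y) = gmul (ginv y) (ginv x).
Proof.
  symmetry. apply ginv_unique.
  rewrite gmulA, <- (gmulA G x y), gmulVr, gmul1r, gmulVr. reflexivity.
Qed.

Lemma ginv_one : ginv (@gone G) = gone.
Proof. symmetry. apply ginv_unique, gmul1l. Qed.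

Lemma ginv_inv (x : G) : ginv (ginv x) = x.
Proof. symmetry. apply ginv_unique, gmulVl. Qed.

Lemma gnpow_succ_r (a : G) (k : nat) : gnpow a (S k) = gmul (gnpow a k) a.
Proof.
  unfold gnpow. induction k as [|k IH]; simpl.
  - rewrite gmul1r, gmul1l. reflexivity.
  - simpl in IH. rewrite IH, gmulA, IH. reflexivity.
Qed.

Definition gconj (x c : G) : G := gmul (gmul x c) (ginv x).

Lemma gconj1 (c : G) : gconj gone c = c.
Proof. unfold gconj. rewrite ginv_one, gmul1l, gmul1r. reflexivity. Qed.

Lemma gconjM (x y c : G) : gconj (gmul x y) c = gconj x (gconj y c).
Proof. unfold gconj. rewrite ginv_mul, !gmulA. reflexivity. Qed.

Lemma gconjVK (a c : G) : gconj a (gconj (ginv a) c) = c.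
Proof.
  unfold gconj. rewrite ginv_inv, !gmulA, gmulVr, gmul1l, <- !gmulA, gmulVr, gmul1r.
  reflexivity.
Qed.

End GroupFacts.

Arguments gconj {G}.

Section Epsilon.
Variable G : Group.

Lemma epsilon_app (u v : word G) : epsilon (u ++ v) = gmul (epsilon u) (epsilon v).
Proof.
  induction u as [|l u IH]; simpl.
  - rewrite gmul1l. reflexivity.
  - rewrite IH, gmulA. reflexivity.
Qed.

Lemma epsilon_repeat_true (a : G) (k : nat) : epsilon (repeat (true, a) k) = gnpow a k.
Proof. induction k as [|k IH]; simpl; [reflexivity | rewrite IH; reflexivity]. Qed.

Lemma epsilon_repeat_false (a : G) (k : nat) :
  epsilon (repeat (false, a) k) = ginv (gnpow a k).
Proof.
  induction k as [|k IH]; simpl.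
  - rewrite ginv_one. reflexivity.
  - rewrite IH, <- ginv_mul, <- gnpow_succ_r. reflexivity.
Qed.

Lemma epsilon_sigma_pow (a : G) (n : Z) : epsilon (sigma_pow a n) = gpow a n.
Proof.
  destruct n; simpl;
    [reflexivity | apply epsilon_repeat_true | apply epsilon_repeat_false].
Qed.

Lemma epsilon_gr_eq (u v : word G) : gr_eq u v -> epsilon u = epsilon v.
Proof.
  induction 1; try congruence.
  - rewrite !epsilon_app. congruence.
  - destruct b; simpl; rewrite gmul1r; [apply gmulVr | apply gmulVl].
  - simpl. rewrite !gmul1r, !gmulA. reflexivity.
  - simpl. rewrite gmul1r, epsilon_sigma_pow. reflexivity.
  - simpl. apply gmul1r.
Qed.

End Epsilon.

Section Presentation.
Variable G : Group.

#[local] Instance gr_eq_Equivalence : Equivalence (@gr_eq G).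
Proof.
  split; [exact (@gr_refl G) | exact (@gr_sym G) | exact (@gr_trans G)].
Qed.

#[local] Instance app_gr_eq_Proper : Proper (@gr_eq G ==> @gr_eq G ==> @gr_eq G) (@app _).
Proof. intros u u' Hu v v' Hv. exact (gr_app Hu Hv). Qed.

#[local] Instance cons_gr_eq_Proper : Proper (eq ==> @gr_eq G ==> @gr_eq G) cons.
Proof. intros l _ <- u v H. exact (gr_app (gr_refl [l]) H). Qed.

Definition letter_val (l : bool * G) : G := if fst l then snd l else ginv (snd l).

Lemma sigma_cancel (a : G) : gr_eq [(true, a); (false, a)] [].
Proof. exact (@gr_cancel G true a). Qed.

Lemma sigmaV_cancel (a : G) : gr_eq [(false, a); (true, a)] [].
Proof. exact (@gr_cancel G false a). Qed.

Lemma letter_sigma_conj (l : bool * G) (c : G) :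
  gr_eq [l; (true, c)] [(true, gconj (letter_val l) c); l].
Proof.
  destruct l as [[|] a]; unfold letter_val; simpl.
  - change [(true, gconj a c); (true, a)] with ([(true, gconj a c)] ++ [(true, a)]).
    unfold gconj. rewrite gr_conj. simpl.
    change [(true, a); (true, c); (false, a); (true, a)]
      with ([(true, a); (true, c)] ++ [(false, a); (true, a)]).
    rewrite sigmaV_cancel, app_nil_r. reflexivity.
  - set (d := gconj (ginv a) c).
    assert (Hc : gr_eq [(true, c)] [(true, a); (true, d); (false, a)]).
    { rewrite <- gr_conj. fold (gconj a d). unfold d. rewrite gconjVK. reflexivity. }
    change [(false, a); (true, c)] with ([(false, a)] ++ [(true, c)]).
    rewrite Hc. simpl.
    change [(false, a); (true, a); (true, d); (false, a)]
      with ([(false, a); (true, a)] ++ [(true, d); (false, a)]).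
    rewrite sigmaV_cancel. reflexivity.
Qed.

Lemma word_sigma_conj (w : word G) (c : G) :
  gr_eq (w ++ [(true, c)]) ((true, gconj (epsilon w) c) :: w).
Proof.
  induction w as [|l w IH]; simpl.
  - rewrite gconj1. reflexivity.
  - rewrite IH.
    change (l :: (true, gconj (epsilon w) c) :: w)
      with ([l; (true, gconj (epsilon w) c)] ++ w).
    rewrite letter_sigma_conj, <- gconjM. reflexivity.
Qed.

Definition gr_commute (u v : word G) : Prop := gr_eq (u ++ v) (v ++ u).

Lemma gr_commuteV (w : word G) (b : G) :
  gr_commute w [(true, b)] -> gr_commute w [(false, b)].
Proof.
  unfold gr_commute. intro H. symmetry.
  transitivity ([(false, b)] ++ (w ++ [(true, b)]) ++ [(false, b)]).
  - simpl. rewrite <- app_assoc. simpl. rewrite sigma_cancel, app_nil_r. reflexivity.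
  - rewrite H. simpl.
    change ((false, b) :: (true, b) :: w ++ [(false, b)])
      with ([(false, b); (true, b)] ++ w ++ [(false, b)]).
    rewrite sigmaV_cancel. reflexivity.
Qed.

Lemma gr_central_of_letters (w : word G) :
  (forall l, gr_commute w [l]) -> gr_central w.
Proof.
  intros Hl v. induction v as [|l v IH].
  - rewrite app_nil_r. reflexivity.
  - change (l :: v) with ([l] ++ v).
    rewrite app_assoc, (Hl l : gr_eq _ _), <- app_assoc, IH. reflexivity.
Qed.

Lemma gr_central_ker_epsilon (w : word G) : epsilon w = gone -> gr_central w.
Proof.
  intro Hw.
  assert (Hsigma : forall b, gr_commute w [(true, b)]).
  { intro b. unfold gr_commute. rewrite word_sigma_conj, Hw, gconj1. reflexivity. }
  apply gr_central_of_letters. intros [[|] b]; [| apply gr_commuteV]; apply Hsigma.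
Qed.

End Presentation.

Theorem mainTheorem8 :
  forall (G : Group),
    (forall u v : word G, gr_eq u v -> epsilon u = epsilon v) /\
    (forall w : word G, epsilon w = gone -> gr_central w).
Proof.
  intro G. split.
  - apply epsilon_gr_eq.
  - apply gr_central_ker_epsilon.
Qed.
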